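(* Let $\pi\colon\mathcal{B}\to\mathcal{C}$ be a surjective open homomorphism of complete topological rings, let $I=\operatorname{Ker}(\pi)$ and let $\mathrm{e}\colon\mathcal{B}\to\mathcal{B}\{T\}$ be a restricted exponential homomorphism. Assume that $\mathrm{e}(I)\subseteq i_0(I)\mathcal{B}\{T\}$. Then there exists a unique restricted exponential homomorphism $\overline{\mathrm{e}}\colon\mathcal{C}\to\mathcal{C}\{T\}$ such that $\pi_T\circ\mathrm{e}=\overline{\mathrm{e}}\circ\pi$, where $\pi_T\colon\mathcal{B}\{T\}\to\mathcal{C}\{T\}$ is the unique homomorphism of topological $\mathcal{B}$-algebras mapping $T$ to $T$ (i.e. $\sum_ib_iT^i\mapsto\sum_i\pi(b_i)T^i$).
   Context: Conventions: topological rings are linearly topologized with a countable fundamental system of open ideals; homomorphisms are continuous; complete means the canonical map to $\varprojlim_{\mathfrak{a}}\mathcal{B}/\mathfrak{a}$ (open ideals, discrete quotients) is a topological isomorphism. For complete $\mathcal{B}$, $\mathcal{B}\{T\}$, $\mathcal{B}\{T,T'\}$ denote restricted power series (coefficients converging to $0$), topologized by the ideals of series with all coefficients in a given open ideal; $i_0\colon\mathcal{B}\to\mathcal{B}\{T\}$ is the inclusion as constant series, and $i_0(I)\mathcal{B}\{T\}$ is the ideal generated by the constant series in $I$. A restricted exponential homomorphism is a continuous ring homomorphism $\mathrm{e}\colon\mathcal{B}\to\mathcal{B}\{T\}$, $\mathrm{e}(b)=\sum_i\mathrm{e}_i(b)T^i$, with $\mathrm{e}_0=\mathrm{id}$ and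 $\sum_{i,j}\mathrm{e}_j(\mathrm{e}_i(b))T'^jT^i=\sum_\ell\mathrm{e}_\ell(b)(T+T')^\ell$ for all $b$. *)

(* Topological rings are commutative rings (possibly zero)
   whose linear topology is given by a countable fundamental system
   [a : nat -> B -> Prop] of ideals (neighbourhoods of 0). *)
From mathcomp Require Import all_boot all_algebra.
Set Implicit Arguments. Unset Strict Implicit. Unset Printing Implicit Defensive.
Import GRing.Theory.
Local Open Scope ring_scope.

Section Defs.
Variable B : comPzRingType.

Definition is_ideal (I : B -> Prop) : Prop :=
  [/\ I 0, (forall x y, I x -> I y -> I (x + y)) & (forall r x, I x -> I (r * x))].

Definition lin_top (a : nat -> B -> Prop) : Prop :=
  (forall n, is_ideal (a n)) /\
  (forall n m, exists k, forall x, a k x -> a n x /\ a m x).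

Definition open_set (a : nat -> B -> Prop) (U : B -> Prop) : Prop :=
  forall x, U x -> exists n, forall y, a n y -> U (x + y).

Definition open_ideal (a : nat -> B -> Prop) (U : B -> Prop) : Prop :=
  is_ideal U /\ open_set a U.

(* completeness: the canonical map B -> lim_{open ideals U} B/U is bijective.
   An element of the inverse limit is represented by a compatible family of
   representatives [x U] (U open ideal), i.e. x U = x V mod U when V ⊆ U.
   (It is then automatically a topological isomorphism.) *)
Definition complete (a : nat -> B -> Prop) : Prop :=
  forall x : (B -> Prop) -> B,
    (forall U V, open_ideal a U -> open_ideal a V ->
       (forall z, V z -> U z) -> U (x U - x V)) ->
    exists y, (forall U, open_ideal a U -> U (y - x U)) /\
      (forall y', (forall U, open_ideal a U -> U (y' - x U)) -> y' = y).

(* coefficient sequences of elements of B{T}: coefficients converge to 0 *)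
Definition restricted (a : nat -> B -> Prop) (s : nat -> B) : Prop :=
  forall n, exists N, forall i, (N <= i)%N -> a n (s i).

(* A restricted exponential homomorphism e : B -> B{T},
   e(b) = sum_i (e i b) T^i, described through its coefficients:
   - e(b) lies in B{T};
   - e is a ring homomorphism (product in B{T} is the Cauchy product);
   - e is continuous for the topology of B{T} whose fundamental system is
     the ideals of series with all coefficients in a given open ideal;
   - e_0 = id;
   - sum_{i,j} e_j(e_i(b)) T'^j T^i = sum_l e_l(b) (T+T')^l, compared
     coefficientwise: the coefficient of T'^j T^i on the right is
     binomial(i+j, i) e_{i+j}(b). *)
Definition is_rexp (a : nat -> B -> Prop) (e : nat -> B -> B) : Prop :=
  (forall b, restricted a (fun i => e i b)) /\
  (forall i, e i 1 = (i == 0%N)%:R) /\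
  (forall i b b', e i (b + b') = e i b + e i b') /\
  (forall i b b', e i (b * b') = \sum_(j < i.+1) e j b * e (i - j)%N b') /\
  (forall n, exists m, forall b, a m b -> forall i, a n (e i b)) /\
  (forall b, e 0%N b = b) /\
  (forall i j b, e j (e i b) = 'C(i + j, i)%:R * e (i + j)%N b).

(* s ∈ i_0(I) B{T}: s = sum_{k<m} c_k f_k with c_k ∈ I constants and
   f_k ∈ B{T} (coefficientwise). *)
Definition in_i0_ideal (a : nat -> B -> Prop) (I : B -> Prop) (s : nat -> B) : Prop :=
  exists (m : nat) (c : 'I_m -> B) (f : 'I_m -> nat -> B),
    (forall k, I (c k)) /\ (forall k, restricted a (f k)) /\
    (forall i, s i = \sum_(k < m) c k * f k i).
End Defs.

Section Maps.
Variables B C : comPzRingType.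
Definition continuous_map (a : nat -> B -> Prop) (c : nat -> C -> Prop) (f : B -> C) : Prop :=
  forall V, open_set c V -> open_set a (fun x => V (f x)).
Definition open_map (a : nat -> B -> Prop) (c : nat -> C -> Prop) (f : B -> C) : Prop :=
  forall U, open_set a U -> open_set c (fun y => exists2 x, U x & f x = y).
End Maps.

(* Since e is additive and maps I = Ker(pi) into i_0(I) B{T}, each coefficient
   map e_i sends I into I, hence descends along the surjection pi to
   ebar_i (pi b) := pi (e_i b).  Every axiom of a restricted exponential
   homomorphism is an identity between images under pi and so passes to ebar;
   restrictedness and continuity pass because pi is continuous and open.
   Uniqueness is forced by surjectivity of pi. *)
From mathcomp Require Import all_boot all_algebra.
Import GRing.Theory.
Local Open Scope ring_scope.

Lemma lin_top_open_ideal {B : comPzRingType} {a : nat -> B -> Prop} n :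
  lin_top a -> open_set a (a n).
Proof. by case=> aI _ x ax; exists n => y ay; case: (aI n) => _ aD _; exact: aD. Qed.

Section Quotient.
Context {B C : comPzRingType} {a : nat -> B -> Prop} {c : nat -> C -> Prop}.
Context { pi : {rmorphism B -> C} }.
Hypotheses (top_a : lin_top a) (top_c : lin_top c).

Lemma in_i0_ideal_kernel {s : nat -> B} :
  in_i0_ideal a (fun x => pi x = 0) s -> forall i, pi (s i) = 0.
Proof.
move=> [m [k [f [pik [_ sE]]]]] i; rewrite sE rmorph_sum big1 // => j _.
by rewrite rmorphM pik mul0r.
Qed.

Lemma continuous_map_nbhs0 :
  continuous_map a c pi -> forall n, exists m, forall b, a m b -> c n (pi b).
Proof.
move=> pic n; have [c0 _ _] := top_c.1 n.
have [|m hm] := pic _ (lin_top_open_ideal n top_c) 0; first by rewrite rmorph0.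
by exists m => b /hm; rewrite add0r.
Qed.

Lemma open_map_nbhs0 :
  open_map a c pi -> forall m, exists n, forall y, c n y -> exists2 b, a m b & pi b = y.
Proof.
move=> pio m; have [a0 _ _] := top_a.1 m.
have [|n hn] := pio _ (lin_top_open_ideal m top_a) 0; first by exists 0; rewrite ?rmorph0.
by exists n => y /hn; rewrite add0r.
Qed.

Variable e : nat -> B -> B.
Hypothesis e_additive : forall i b b', e i (b + b') = e i b + e i b'.
Hypothesis e_kernel :
  forall b, pi b = 0 -> in_i0_ideal a (fun x => pi x = 0) (fun i => e i b).

Lemma rexp_coef_congr i x x' : pi x = pi x' -> pi (e i x) = pi (e i x').
Proof.
move=> pixx'; have pi_d : pi (x - x') = 0 by rewrite rmorphB pixx' subrr.
rewrite -(subrK x' x) addrC e_additive rmorphD.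
by rewrite (in_i0_ideal_kernel (e_kernel _ pi_d)) addr0.
Qed.

Hypothesis pi_surj : forall y : C, exists x : B, pi x = y.

Lemma pi_surj_eq y : exists x, pi x == y.
Proof. by have [x <-] := pi_surj y; exists x. Qed.

Definition pi_lift (y : C) : B := xchoose (pi_surj_eq y).

Lemma pi_liftK y : pi (pi_lift y) = y.
Proof. exact/eqP/(xchooseP (pi_surj_eq y)). Qed.

Definition rexp_quotient (i : nat) (y : C) : C := pi (e i (pi_lift y)).

Lemma rexp_quotientE i b : pi (e i b) = rexp_quotient i (pi b).
Proof. by apply: rexp_coef_congr; rewrite pi_liftK. Qed.

Lemma rexp_quotient_unique (ebar : nat -> C -> C) :
  (forall i b, pi (e i b) = ebar i (pi b)) -> forall i y, ebar i y = rexp_quotient i y.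
Proof. by move=> ebarE i y; rewrite -(pi_liftK y) -ebarE rexp_quotientE. Qed.

Lemma is_rexp_quotient :
  continuous_map a c pi -> open_map a c pi -> is_rexp a e -> is_rexp c rexp_quotient.
Proof.
move=> pic pio [e_restr [e1 [_ [eM [e_cont [e0 eC]]]]]].
split; [|split; [|split; [|split; [|split; [|split]]]]].
- move=> y n; have [m hm] := continuous_map_nbhs0 pic n.
  have [N hN] := e_restr (pi_lift y) m.
  by exists N => i /hN /hm.
- by move=> i; rewrite -[1 in LHS](rmorph1 pi) -rexp_quotientE e1 rmorph_nat.
- move=> i y y'.
  by rewrite -(pi_liftK y) -(pi_liftK y') -rmorphD -!rexp_quotientE e_additive rmorphD.
- move=> i y y'; rewrite -(pi_liftK y) -(pi_liftK y') -rmorphM -rexp_quotientE eM.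
  by rewrite rmorph_sum; apply: eq_bigr => j _; rewrite rmorphM -!rexp_quotientE.
- move=> n; have [n' hn'] := continuous_map_nbhs0 pic n.
  have [m' hm'] := e_cont n'; have [m hm] := open_map_nbhs0 pio m'.
  exists m => y /hm [b ab <-] i.
  by rewrite -rexp_quotientE; exact/hn'/hm'.
- by move=> y; rewrite /rexp_quotient e0 pi_liftK.
- by move=> i j y; rewrite -(pi_liftK y) -!rexp_quotientE eC rmorphM rmorph_nat.
Qed.

End Quotient.

Theorem proposition2p7 (B C : comPzRingType)
    (a : nat -> B -> Prop) (c : nat -> C -> Prop)
    (pi : {rmorphism B -> C}) (e : nat -> B -> B) :
  lin_top a -> lin_top c -> complete a -> complete c ->
  continuous_map a c pi -> open_map a c pi ->
  (forall y : C, exists x : B, pi x = y) ->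
  is_rexp a e ->
  (forall b, pi b = 0 -> in_i0_ideal a (fun x => pi x = 0) (fun i => e i b)) ->
  exists ebar : nat -> C -> C,
    is_rexp c ebar /\
    (forall i b, pi (e i b) = ebar i (pi b)) /\
    (forall ebar' : nat -> C -> C, is_rexp c ebar' ->
       (forall i b, pi (e i b) = ebar' i (pi b)) ->
       forall i x, ebar' i x = ebar i x).
Proof.
move=> top_a top_c _ _ pic pio pi_surj e_rexp e_kernel.
have e_additive : forall i b b', e i (b + b') = e i b + e i b'.
  by case: e_rexp => [_ [_ []]].
exists (rexp_quotient e pi_surj); split; last split.
- exact: (is_rexp_quotient top_a top_c e e_additive e_kernel).
- exact: (rexp_quotientE e e_additive e_kernel).
- by move=> ebar' _; apply: (rexp_quotient_unique e e_additive e_kernel).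
Qed.
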